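(* Let $n\ge2$ and $n_a,n_b\ge1$ be integers with $n_a\ge n_b$ and $n_a+n_b=n$. (1) If $n_a=n_b=n/2$, then $(n_a,n_b)\in QB(n)$. (2) If $n_a>n_b$, then $(n_a,n_b)\in QB(n)$ if and only if one of the following holds: (i) there exist $k\in\mathbb{N}$ and $p\in\mathbb{N}_{\ge1}$ with $n=2^k(2p+1)$, $n_a=2^k(p+1)$, $n_b=2^kp$; (ii) there exist $k\in\mathbb{N}$, $l\in\mathbb{N}_{\ge2}$, $p\in\mathbb{N}_{\ge1}$ and $t\in\mathbb{N}$ with $0\le t<2^{l-2}$ such that $n=2^k(2^l(2p+1)+2t+1)$, $n_a=2^{k+l}(p+1)$, $n_b=2^k(2^lp+2t+1)$; (iii) there exist $k\in\mathbb{N}$, $l\in\mathbb{N}_{\ge2}$, $p\in\mathbb{N}_{\ge1}$ and $t\in\mathbb{N}$ with $0\le t<2^{l-2}$ such that $n=2^k(2^l(2p+1)-(2t+1))$, $n_a=2^k(2^l(p+1)-(2t+1))$, $n_b=2^{k+l}p$.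
   Context: $\mathbb{N}$ includes $0$; $\mathbb{N}_{\ge m}=\{n\in\mathbb{N}:n\ge m\}$. Bifurcating trees: rooted trees in which every internal node has exactly two children; $\mathcal{T}_n$ is the set of isomorphism classes of bifurcating trees with $n$ leaves. The Colless index is $\mathcal{C}(T)=\sum_{v}|\kappa_T(v_1)-\kappa_T(v_2)|$, summed over internal nodes $v$ with children $v_1,v_2$, where $\kappa_T(w)$ is the number of leaves descending from $w$; $c_n=\min\{\mathcal{C}(T):T\in\mathcal{T}_n\}$. For $n\ge2$, $QB(n)=\{(n_a,n_b)\in\mathbb{N}^2: n_a\ge n_b\ge1,\ n_a+n_b=n,\ c_{n_a}+c_{n_b}+n_a-n_b=c_n\}$. *)

From mathcomp Require Import all_boot.
Set Implicit Arguments. Unset Strict Implicit. Unset Printing Implicit Defensive.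

(* Rooted bifurcating trees (plane representatives; isomorphism classes do
   not matter since the Colless index and leaf count are invariant). *)
Inductive btree : Type := Leaf | Node of btree & btree.

Fixpoint leaves (T : btree) : nat :=
  match T with Leaf => 1 | Node l r => leaves l + leaves r end.

Definition absdiff (a b : nat) : nat := (a - b) + (b - a).

Fixpoint colless (T : btree) : nat :=
  match T with
  | Leaf => 0
  | Node l r => colless l + colless r + absdiff (leaves l) (leaves r)
  end.

(* trees_f f n: all trees with exactly n leaves, for n <= f (fuel) *)
Fixpoint trees_f (f n : nat) : seq btree :=
  match f with
  | 0 => [::]
  | f'.+1 =>
      if n == 1 then [:: Leaf]
      else flatten [seq [seq Node x y | x <- trees_f f' i, y <- trees_f f' (n - i)]
                   | i <- iota 1 n.-1]
  end.

Definition trees_n (n : nat) : seq btree := trees_f n n.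

(* c_n = min Colless index over T_n (for n >= 1, T_n is nonempty; value 0 for n = 0 is irrelevant) *)
Definition min_colless (n : nat) : nat :=
  match [seq colless T | T <- trees_n n] with
  | [::] => 0
  | x :: s => foldr minn x s
  end.

Definition QB (n : nat) (na nb : nat) : Prop :=
  [/\ na >= nb, nb >= 1, na + nb = n &
      min_colless na + min_colless nb + (na - nb) = min_colless n].

From HB Require Import structures.
From mathcomp Require Import all_boot zify.
Set Implicit Arguments. Unset Strict Implicit. Unset Printing Implicit Defensive.

(* Let bal n be the maximally balanced tree (the root splits n into
   ceil(n/2) and floor(n/2), recursively) and fbal n its Colless index, so
   fbal 1 = 0, fbal (2m) = 2 fbal m and fbal (2m+1) = fbal (m+1) + fbal m + 1.
   For a > b let N be the least power of two exceeding a - b, and let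
   crit a b mean: N <= 2b and N divides a or b.  The central fact
   (split_law_holds) is that for 1 <= b <= a
       fbal (a + b) <= fbal a + fbal b + (a - b),
   with equality iff a = b or crit a b; it is proved by strong induction on
   a + b, splitting on the parities of a and b, using the recurrences of fbal
   and matching recurrences for crit.  Applied at every node, the inequality
   shows that bal n is Colless-minimal, hence c_n = fbal n, and QB n na nb
   becomes "na = nb or crit na nb".  Finally crit is invariant under
   multiplication by 2, it forces 2^k to divide na and nb whenever 2^k divides
   na - nb, and for an odd gap it holds exactly on three explicit families;
   scaling these by 2^k yields the three families of the theorem. *)

(* The maximally balanced tree with n leaves: the root splits n into
   n - n/2 and n/2.  The fuel argument only ensures termination. *)
Fixpoint balf (fuel n : nat) : btree :=
  match fuel with
  | 0 => Leaf
  | fuel'.+1 => if n <= 1 then Leaf else Node (balf fuel' (n - n./2)) (balf fuel' n./2)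
  end.

Definition bal (n : nat) : btree := balf n n.

(* Colless index of the maximally balanced tree; it turns out to be c_n. *)
Definition fbal (n : nat) : nat := colless (bal n).

Lemma balf_fuel fuel1 fuel2 n : n <= fuel1 -> n <= fuel2 -> balf fuel1 n = balf fuel2 n.
Proof.
elim: fuel1 fuel2 n => [|fuel1 IH] [|fuel2] n /= h1 h2; try by rewrite ?ifT //; lia.
by case: ifP => // hn; rewrite (IH fuel2) ?(IH fuel2 n./2) //; lia.
Qed.

Lemma bal_node n : 2 <= n -> bal n = Node (bal (n - n./2)) (bal n./2).
Proof.
case: n => [|n] // hn; rewrite /bal /= ifF; last lia.
by congr Node; apply: balf_fuel; lia.
Qed.

Lemma leaves_gt0 T : 0 < leaves T.
Proof. by elim: T => //= l IHl r IHr; rewrite addn_gt0 IHl. Qed.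

Lemma leaves_bal n : 1 <= n -> leaves (bal n) = n.
Proof.
elim/ltn_ind: n => n IH hn; case: (leqP n 1) => h; first by have -> : n = 1 by lia.
by rewrite bal_node //= !IH; lia.
Qed.

Lemma fbal_1 : fbal 1 = 0.
Proof. by []. Qed.

Lemma fbal_even m : 1 <= m -> fbal (2 * m) = 2 * fbal m.
Proof.
move=> hm; rewrite /fbal bal_node; last lia.
have -> : (2 * m)./2 = m by lia.
by rewrite (_ : 2 * m - m = m) /= /absdiff ?subnn; lia.
Qed.

Lemma fbal_odd m : 1 <= m -> fbal (2 * m + 1) = fbal (m + 1) + fbal m + 1.
Proof.
move=> hm; rewrite /fbal bal_node; last lia.
have -> : (2 * m + 1)./2 = m by lia.
by rewrite (_ : 2 * m + 1 - m = m + 1) /= /absdiff ?leaves_bal; lia.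
Qed.

Fixpoint btree_eqb (x y : btree) : bool :=
  match x, y with
  | Leaf, Leaf => true
  | Node a b, Node c d => btree_eqb a c && btree_eqb b d
  | _, _ => false
  end.

Lemma btree_eqP : Equality.axiom btree_eqb.
Proof.
elim=> [|a IHa b IHb] [|c d] /=; try by constructor.
by apply: (iffP andP) => [[/IHa -> /IHb ->]|[<- <-]]; split; [apply/IHa | apply/IHb].
Qed.

HB.instance Definition _ := hasDecEq.Build btree btree_eqP.

Lemma trees_f_leaves fuel n T : T \in trees_f fuel n -> leaves T = n.
Proof.
elim: fuel n T => [|fuel IH] n T //=; case: ifP => [/eqP -> | _]; first by rewrite mem_seq1 => /eqP ->.
move=> /flattenP [s /mapP [i hi ->]] /allpairsPdep [x [y [hx hy ->]]] /=.
by rewrite (IH _ _ hx) (IH _ _ hy); move: hi; rewrite mem_iota; lia.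
Qed.

Lemma trees_f_complete fuel T : leaves T <= fuel -> T \in trees_f fuel (leaves T).
Proof.
elim: fuel T => [|fuel IH] T hT /=; first by have := leaves_gt0 T; lia.
case: T hT => [|l r] /= hT; first by rewrite mem_seq1.
have hl := leaves_gt0 l; have hr := leaves_gt0 r.
rewrite ifF; last lia.
apply/flattenP; eexists; first by apply/mapP; exists (leaves l); rewrite ?mem_iota; [lia|].
rewrite (_ : leaves l + leaves r - leaves l = leaves r); last lia.
by apply: allpairs_f; apply: IH; lia.
Qed.

Definition npow2 (d : nat) : nat := 2 ^ (trunc_log 2 d).+1.

Lemma npow2_spec d : 1 <= d -> d < npow2 d <= 2 * d.
Proof.
move=> hd; rewrite /npow2 trunc_log_ltn //= expnS.
by have := trunc_logP (isT : 1 < 2) hd; lia.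
Qed.

Lemma npow2_char d l : d < 2 ^ l <= 2 * d -> npow2 d = 2 ^ l.
Proof.
case: l => [|l]; first lia.
rewrite expnS => hl; rewrite /npow2 (@trunc_log_eq 2 l) // expnS; lia.
Qed.

Lemma npow2_even d : 2 %| npow2 d.
Proof. by rewrite /npow2 expnS dvdn_mulr. Qed.

Lemma npow2_1 : npow2 1 = 2.
Proof. by []. Qed.

Lemma npow2_double e r : 1 <= e -> r <= 1 -> npow2 (2 * e + r) = 2 * npow2 e.
Proof.
move=> he hr; have := npow2_spec he; rewrite /npow2 -expnS => h.
by apply: npow2_char; rewrite expnS; lia.
Qed.

Lemma npow2_succ e : 1 <= e ->
  npow2 (e + 1) = npow2 e \/ (npow2 (e + 1) = 2 * (e + 1) /\ npow2 e = e + 1).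
Proof.
move=> he; have := npow2_spec (leq_addl e 1); rewrite {1 2}/npow2 expnS.
set P := 2 ^ trunc_log 2 (e + 1) => hP.
have -> : npow2 (e + 1) = 2 * P by rewrite /npow2 expnS.
case: (leqP (2 * P) (2 * e)) => hPe.
  by left; symmetry; rewrite -expnS; apply: npow2_char; rewrite expnS; lia.
right; split; first lia.
have -> : e + 1 = P by lia.
by apply: npow2_char; rewrite /P; lia.
Qed.

(* The balance criterion: with N the least power of two exceeding the gap
   a - b, the split (a, b) is optimal iff a = b or N <= 2b and N divides a
   or b. *)
Definition crit (a b : nat) : Prop :=
  npow2 (a - b) <= 2 * b /\ (npow2 (a - b) %| a \/ npow2 (a - b) %| b).

Lemma dvd_consecutive_multiple c q : 0 < c -> 2 * c %| q * c \/ 2 * c %| q.+1 * c.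
Proof. by move=> hc; rewrite !dvdn_pmul2r // !dvdn2 /=; case: (odd q); auto. Qed.

Lemma not_dvd_consecutive M b : 2 <= M -> M %| b -> M %| b + 1 -> False.
Proof. by move=> hM hb; rewrite dvdn_addr // dvdn1 => /eqP; lia. Qed.

Lemma not_dvd_odd M x : 2 %| M -> odd x -> ~ (M %| x).
Proof. by move=> hM ox /(dvdn_trans hM); rewrite dvdn2 ox. Qed.

Lemma crit_gap1 b : 1 <= b -> crit (b + 1) b.
Proof.
move=> hb; rewrite /crit addKn npow2_1; split; first lia.
by rewrite !dvdn2 addn1 /=; case: (odd b); auto.
Qed.

Lemma crit_double x y : y < x -> crit (2 * x) (2 * y) <-> crit x y.
Proof.
move=> hxy; rewrite /crit -mulnBr -[2 * (x - y)]addn0 npow2_double ?subn_gt0 // !dvdn_pmul2l //.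
by split=> -[h1 h2]; split => //; lia.
Qed.

(* Two odd parts never satisfy the criterion (N is even). *)
Lemma crit_odd_odd x y : odd x -> odd y -> ~ crit x y.
Proof. by move=> ox oy [_ [h|h]]; [move: h | move: h]; apply: not_dvd_odd; rewrite ?npow2_even. Qed.

Lemma crit_even_one a : 1 <= a -> crit (2 * a) 1 <-> a = 1.
Proof.
move=> ha; rewrite /crit; split=> [[h _]|->]; last by rewrite npow2_1; split=> //; left.
by have := npow2_spec (_ : 1 <= 2 * a - 1); lia.
Qed.

(* Recurrence for the criterion at (2a, 2b+1), mirroring
   fbal (2(a+b)+1) = fbal (a+b+1) + fbal (a+b) + 1. *)
Lemma crit_even_odd a b : 1 <= b -> b < a ->
  crit (2 * a) (2 * b + 1) <-> crit a b /\ (a = b + 1 \/ crit a (b + 1)).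
Proof.
move=> hb hab; have [e -> {a hab}] : exists e, a = b + 1 + e by exists (a - b - 1); lia.
have [->|he] := posnP e.
  rewrite !addn0 (_ : 2 * (b + 1) = 2 * b + 1 + 1); last lia.
  by split=> _; [split; [exact: crit_gap1 | left] | apply: crit_gap1; lia].
rewrite /crit (_ : 2 * (b + 1 + e) - (2 * b + 1) = 2 * e + 1); last lia.
rewrite (_ : b + 1 + e - b = e + 1); last lia.
rewrite (_ : b + 1 + e - (b + 1) = e); last lia.
rewrite npow2_double // dvdn_pmul2l //.
have M2 : 2 <= npow2 e by have := npow2_spec he; lia.
have nd : ~ (2 * npow2 e %| 2 * b + 1).
  by apply: not_dvd_odd; rewrite ?dvdn_mulr // oddD oddM.
case: (npow2_succ he) => [->|[-> E]].
- split=> [[h1 [h2|h2]]|[[h1 h2] [h3|[h4 h5]]]]; [|by case: nd| lia|].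
    have := npow2_even e; rewrite dvdn2 => M_even.
    by split; [split; [lia | left] | right; split; [lia | left]].
  split; first lia; left.
  by case: h2 => // h2; case: h5 => // h5; case: (not_dvd_consecutive M2 h2 h5).
- rewrite E {}(_ : b + 1 + e = b + (e + 1)); last lia.
  rewrite E in M2 nd; set c := e + 1 in M2 nd *.
  have hc : 0 < c by lia.
  rewrite dvdn_addl ?dvdnn //.
  split=> [[h1 [h2|h2]]|[[h1 h2] _]].
  + case/dvdnP: h2 => q Hq.
    have hq : 1 <= q by nia.
    split; last by right; split; [lia | left; rewrite Hq dvdn_mull].
    split; first nia.
    by rewrite Hq -mulSnr; case: (dvd_consecutive_multiple q hc); auto.
  + by case: nd.
  + split; first lia; left.
    case: h2 => h2; [rewrite -(dvdn_addl b (dvdnn c)) |];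
      by apply: dvdn_trans h2; apply: dvdn_mull.
Qed.

Lemma crit_odd_even a b : 1 <= b -> b <= a ->
  crit (2 * a + 1) (2 * b) <-> (a = b \/ crit a b) /\ crit (a + 1) b.
Proof.
move=> hb hab; have [c -> {a hab}] : exists c, a = b + c by exists (a - b); lia.
have [->|hc] := posnP c.
  by rewrite !addn0; split=> _; [split; [left | exact: crit_gap1] | apply: crit_gap1; lia].
rewrite /crit (_ : 2 * (b + c) + 1 - 2 * b = 2 * c + 1); last lia.
rewrite (_ : b + c - b = c); last lia.
rewrite (_ : b + c + 1 - b = c + 1); last lia.
rewrite npow2_double // dvdn_pmul2l //.
have M2 : 2 <= npow2 c by have := npow2_spec hc; lia.
have nd : ~ (2 * npow2 c %| 2 * (b + c) + 1).
  by apply: not_dvd_odd; rewrite ?dvdn_mulr // oddD oddM.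
case: (npow2_succ hc) => [->|[-> E]].
- split=> [[h1 [h2|h2]]|[[h|[h1 h2]] [h3 h4]]]; [by case: nd | | lia |].
    by split; [right; split; [lia | right] | split; [lia | right]].
  split; first lia; right.
  by case: h4 => // h4; case: h2 => // h2; case: (not_dvd_consecutive M2 h2 h4).
- rewrite E in M2 nd *; rewrite (_ : b + c + 1 = b + (c + 1)); last lia.
  set m := c + 1 in M2 nd *.
  have hm : 0 < m by lia.
  split=> [[h1 [h2|h2]]|[_ [h3 h4]]].
  + by case: nd.
  + case/dvdnP: h2 => q Hq.
    have hq : 1 <= q by nia.
    split; first by right; split; [nia | right; rewrite Hq dvdn_mull].
    split; first nia.
    by rewrite Hq -mulSnr; case: (dvd_consecutive_multiple q hm); auto.
  + split; first lia; right.
    case: h4 => h4; [rewrite -(dvdn_addr _ (dvdnn m)) addnC |];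
      by apply: dvdn_trans h4; apply: dvdn_mull.
Qed.

(* Colless index of the tree whose root splits into balanced subtrees with
   a and b leaves. *)
Definition split_cost (a b : nat) : nat := fbal a + fbal b + (a - b).

Definition split_law (a b : nat) : Prop :=
  fbal (a + b) <= split_cost a b /\
  (fbal (a + b) = split_cost a b <-> a = b \/ crit a b).

Lemma split_lawE a b : b < a ->
  split_law a b <->
  fbal (a + b) <= split_cost a b /\ (fbal (a + b) = split_cost a b <-> crit a b).
Proof.
move=> hab; rewrite /split_law.
have dropEq : (a = b \/ crit a b) <-> crit a b by split=> [[|]|]; [lia | | right].
by rewrite dropEq.
Qed.

(* Equal parts: fbal (2a) = 2 fbal a. *)
Lemma law_diag a : 1 <= a -> split_law a a.
Proof.
move=> ha; rewrite /split_law /split_cost subnn (_ : a + a = 2 * a); last lia.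
by rewrite fbal_even //; split; [lia | split=> _; [left | lia]].
Qed.

(* The parity cases: each derives the law for (a, b) from the law for
   the splits of (a + b) / 2 occurring in the recurrence of fbal. *)
Lemma law_even_even a b : 1 <= b -> b < a -> split_law a b -> split_law (2 * a) (2 * b).
Proof.
move=> hb hab /(split_lawE hab) [le eq]; rewrite split_lawE; last lia.
rewrite (_ : 2 * a + 2 * b = 2 * (a + b)); last lia.
rewrite /split_cost in le eq *.
by rewrite !fbal_even ?crit_double -?eq; lia.
Qed.

Lemma law_even_one a : 1 <= a -> split_law a 1 -> split_law (2 * a) 1.
Proof.
move=> ha [le eq]; rewrite /split_law /split_cost in le eq *.
rewrite fbal_odd // fbal_even // fbal_1 crit_even_one //.
rewrite fbal_1 in le eq.
split; first lia.
split=> [?|[|a1]]; [right; lia | lia | ].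
by have := proj2 eq (or_introl a1); lia.
Qed.

Lemma law_even_odd a b : 1 <= b -> b < a ->
  split_law a b -> split_law a (b + 1) -> split_law (2 * a) (2 * b + 1).
Proof.
move=> hb hab /(split_lawE hab) [le1 eq1] [le2 eq2]; rewrite split_lawE; last lia.
rewrite (_ : 2 * a + (2 * b + 1) = 2 * (a + b) + 1); last lia.
rewrite /split_cost addnA in le1 eq1 le2 eq2 *.
rewrite !fbal_odd ?fbal_even ?crit_even_odd; try lia.
split; first lia.
split=> [E|[/eq1 E1 /eq2 E2]]; last lia.
by split; [apply/eq1 | apply/eq2]; lia.
Qed.

Lemma law_odd_even a b : 1 <= b -> b <= a ->
  split_law a b -> split_law (a + 1) b -> split_law (2 * a + 1) (2 * b).
Proof.
move=> hb hab; have hab1 : b < a + 1 by lia.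
move=> [le1 eq1] /(split_lawE hab1) [le2 eq2]; rewrite split_lawE; last lia.
rewrite (_ : 2 * a + 1 + 2 * b = 2 * (a + b) + 1); last lia.
have Eab : a + 1 + b = a + b + 1 by lia.
rewrite /split_cost Eab in le1 eq1 le2 eq2 *.
rewrite !fbal_odd ?fbal_even ?crit_odd_even; try lia.
split; first lia.
split=> [E|[/eq1 E1 /eq2 E2]]; last lia.
by split; [apply/eq1 | apply/eq2]; lia.
Qed.

Lemma law_of_strict a b : b < a -> fbal (a + b) < split_cost a b -> ~ crit a b -> split_law a b.
Proof. by move=> hab lt ncrit; rewrite split_lawE //; split; [lia | split=> [?|/ncrit]]; [lia|]. Qed.

Lemma odd_double_succ m : odd (2 * m + 1).
Proof. by rewrite oddD oddM. Qed.

Lemma law_odd_one a : 1 <= a -> split_law a 1 -> split_law (2 * a + 1) 1.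
Proof.
move=> ha [le _]; apply: law_of_strict; first lia; last first.
  by apply: crit_odd_odd; rewrite ?odd_double_succ.
rewrite /split_cost fbal_1 in le *.
by rewrite (_ : 2 * a + 1 + 1 = 2 * (a + 1)) ?fbal_even ?fbal_odd; lia.
Qed.

Lemma law_odd_odd a b : 1 <= b -> b < a ->
  split_law (a + 1) b -> split_law a (b + 1) -> split_law (2 * a + 1) (2 * b + 1).
Proof.
move=> hb hab [le1 _] [le2 _]; apply: law_of_strict; first lia; last first.
  by apply: crit_odd_odd; rewrite odd_double_succ.
rewrite /split_cost (_ : a + 1 + b = a + (b + 1)) in le1; last lia.
rewrite /split_cost in le2 *.
by rewrite (_ : 2 * a + 1 + (2 * b + 1) = 2 * (a + (b + 1))) ?fbal_even ?fbal_odd; lia.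
Qed.

Lemma parity_cases n : exists m, n = 2 * m \/ n = 2 * m + 1.
Proof. exists n./2; have := odd_double_half n; case: (odd n) => /= ?; [right | left]; lia. Qed.

Theorem split_law_holds a b : 1 <= b -> b <= a -> split_law a b.
Proof.
have [s] := ubnP (a + b); elim: s a b => // s IH a b hs hb hba.
have law x y : 1 <= y -> y <= x -> x + y < a + b -> split_law x y.
  by move=> *; apply: IH => //; lia.
case: (ltngtP a b) => [|hlt|<-]; [lia | | by apply: law_diag; lia].
have [a' [Ea|Ea]] := parity_cases a; have [b' [Eb|Eb]] := parity_cases b; subst a b.
- by apply: law_even_even; try apply: law; lia.
- have [->|hb'] := posnP b'; first by apply: law_even_one; try apply: law; lia.
  by apply: law_even_odd; try apply: law; lia.
- by apply: law_odd_even; try apply: law; lia.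
- have [->|hb'] := posnP b'; first by apply: law_odd_one; try apply: law; lia.
  by apply: law_odd_odd; try apply: law; lia.
Qed.

(* Every tree with n leaves has Colless index at least fbal n: apply the
   split law at the root and induct. *)
Lemma colless_ge_fbal T : fbal (leaves T) <= colless T.
Proof.
elim: T => [|l IHl r IHr] //=.
have hl := leaves_gt0 l; have hr := leaves_gt0 r.
rewrite /absdiff; case: (leqP (leaves r) (leaves l)) => h.
  by have [le _] := split_law_holds hr h; move: le; rewrite /split_cost; lia.
have [le _] := split_law_holds hl (ltnW h).
by move: le; rewrite /split_cost addnC; lia.
Qed.

Lemma foldr_minn_le x s y : y \in x :: s -> foldr minn x s <= y.
Proof.
elim: s y => [|z s IH] y /=; first by rewrite mem_seq1 => /eqP ->.
rewrite !in_cons geq_min => /or3P [/eqP ->|/eqP ->|hy]; rewrite ?leqnn ?orbT //.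
  by rewrite IH ?orbT // in_cons eqxx.
by rewrite IH ?orbT // in_cons hy orbT.
Qed.

Lemma foldr_minn_mem x s : foldr minn x s \in x :: s.
Proof.
elim: s => [|z s IH] /=; first by rewrite mem_seq1.
rewrite /minn; case: ifP => _; first by rewrite !in_cons eqxx orbT.
by move: IH; rewrite !in_cons => /orP [->|->]; rewrite ?orbT.
Qed.

Theorem min_colless_fbal n : 1 <= n -> min_colless n = fbal n.
Proof.
move=> hn; rewrite /min_colless /trees_n.
have hin : fbal n \in [seq colless T | T <- trees_f n n].
  apply/mapP; exists (bal n) => //.
  by have := @trees_f_complete n (bal n); rewrite leaves_bal //; apply.
have hlb : all (fun c => fbal n <= c) [seq colless T | T <- trees_f n n].
  rewrite all_map; apply/allP => T hT /=.
  by rewrite -(trees_f_leaves hT) colless_ge_fbal.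
move: hin hlb; case: [seq colless T | T <- trees_f n n] => [|x s] // hin hlb.
by apply/eqP; rewrite eqn_leq foldr_minn_le //= (allP hlb _ (foldr_minn_mem x s)).
Qed.

Lemma crit_scale k x y : y < x -> crit (2 ^ k * x) (2 ^ k * y) <-> crit x y.
Proof.
move=> hxy; elim: k => [|k IH]; first by rewrite !mul1n.
rewrite expnS -!mulnA crit_double //.
by rewrite ltn_pmul2l ?expn_gt0.
Qed.

Lemma odd_part d : 1 <= d -> exists k D, odd D /\ d = 2 ^ k * D.
Proof.
elim/ltn_ind: d => d IH hd; case: (boolP (odd d)) => od.
  by exists 0, d; rewrite mul1n.
have := odd_double_half d; rewrite (negbTE od) /= => Ed.
have [k [D [oD Eh]]] := IH d./2 ltac:(lia) ltac:(lia).
by exists k.+1, D; split => //; rewrite expnS; lia.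
Qed.

(* Under the criterion, a power of two dividing the gap divides both parts
   (it divides N, which divides one part). *)
Lemma crit_dvd_pow2 a b k : b < a -> crit a b -> 2 ^ k %| a - b -> 2 ^ k %| a /\ 2 ^ k %| b.
Proof.
move=> hab [_ hN] hk.
have hd : 1 <= a - b by lia.
have hkN : 2 ^ k %| npow2 (a - b).
  have := npow2_spec hd; have := dvdn_leq hd hk; rewrite /npow2 => h1 h2.
  by rewrite dvdn_exp2l // ltnW // -(@ltn_exp2l 2) //; lia.
have Ea : a = b + (a - b) by lia.
case: hN => /(dvdn_trans hkN) hdiv; split=> //.
  by rewrite -(dvdn_addl b hk) -Ea.
by rewrite Ea (dvdn_addl _ hk).
Qed.

Lemma pow2_quarter l : 2 <= l -> 2 ^ l = 4 * 2 ^ (l - 2).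
Proof. by move=> hl; rewrite -{1}(subnKC hl) expnD. Qed.

(* An odd gap D >= 3 lies strictly between 2^(l-1) and 2^l, so it is
   2^l - (2t+1) with t < 2^(l-2). *)
Lemma odd_gap_shape D : odd D -> 3 <= D ->
  exists l t, [/\ 2 <= l, t < 2 ^ (l - 2) & D = 2 ^ l - (2 * t + 1)].
Proof.
move=> oD hD; have := npow2_spec (ltnW (ltnW hD)); rewrite /npow2.
set l := (trunc_log 2 D).+1 => hN.
have hl : 2 <= l by rewrite -(@ltn_exp2l 2) //; lia.
have [d' Ed] : exists d', D = 2 * d' + 1.
  by exists D./2; have := odd_double_half D; rewrite oD /=; lia.
move: hN; rewrite pow2_quarter // => hN.
exists l, ((4 * 2 ^ (l - 2) - D)./2); split => //; last by rewrite pow2_quarter //; lia.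
have := odd_double_half (4 * 2 ^ (l - 2) - D); rewrite oddB; last lia.
by rewrite oddM oD /=; lia.
Qed.

(* For such a gap N = 2^l, and the criterion says that either the larger
   part is 2^l (p + 1) or the smaller part is 2^l p, for some p >= 1. *)
Lemma crit_large_gap b l t : 2 <= l -> t < 2 ^ (l - 2) ->
  crit (b + (2 ^ l - (2 * t + 1))) b <->
  (exists p, 1 <= p /\ b + (2 ^ l - (2 * t + 1)) = 2 ^ l * (p + 1)) \/
  (exists p, 1 <= p /\ b = 2 ^ l * p).
Proof.
move=> hl ht; rewrite /crit addKn.
have -> : npow2 (2 ^ l - (2 * t + 1)) = 2 ^ l by apply: npow2_char; rewrite pow2_quarter //; lia.
rewrite pow2_quarter //; set Y := 2 ^ (l - 2) in ht *; split.
- case=> h [/dvdnP [q Eq] | /dvdnP [q Eq]]; [left; exists q.-1 | right; exists q]; nia.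
- case=> [[p [hp E]]|[p [hp E]]]; (split; first nia); rewrite E; [left|right];
    exact: dvdn_mulr.
Qed.

(* The three families of the theorem with k = 0: exactly the splits with an
   odd gap satisfying the criterion. *)
Definition odd_gap_family (a b : nat) : Prop :=
  (exists p, 1 <= p /\ a = p + 1 /\ b = p) \/
  (exists l p t, 2 <= l /\ 1 <= p /\ t < 2 ^ (l - 2) /\
     a = 2 ^ l * (p + 1) /\ b = 2 ^ l * p + 2 * t + 1) \/
  (exists l p t, 2 <= l /\ 1 <= p /\ t < 2 ^ (l - 2) /\
     a = 2 ^ l * (p + 1) - (2 * t + 1) /\ b = 2 ^ l * p).

Lemma crit_family a b : b < a -> odd (a - b) -> crit a b -> odd_gap_family a b.
Proof.
move=> hab oD hcrit; have Ea : a = b + (a - b) by lia.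
case: (ltngtP (a - b) 1) => [|hD|hD]; first lia; last first.
  by left; exists b; move: hcrit => [+ _]; rewrite hD npow2_1; lia.
have hD3 : 3 <= a - b by move: oD hD; case: (a - b) => [|[|[|]]].
have [l [t [hl ht ED]]] := odd_gap_shape oD hD3.
have hX := pow2_quarter hl.
move: hcrit; rewrite Ea ED crit_large_gap // => -[[p [hp E]] | [p [hp E]]]; right;
  [left | right]; exists l, p, t; do 3 (split=> //); nia.
Qed.

Lemma family_crit a b : odd_gap_family a b -> b < a /\ crit a b.
Proof.
case=> [[p [hp [-> ->]]]|[[l [p [t [hl [hp [ht [Ea Eb]]]]]]]|[l [p [t [hl [hp [ht [Ea Eb]]]]]]]]].
- by split; [lia | apply: crit_gap1].
- have hX := pow2_quarter hl.
  have Ea' : a = b + (2 ^ l - (2 * t + 1)) by nia.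
  split; first nia.
  by rewrite Ea' crit_large_gap //; left; exists p; split; nia.
- have hX := pow2_quarter hl.
  have Ea' : a = b + (2 ^ l - (2 * t + 1)) by nia.
  split; first nia.
  by rewrite Ea' crit_large_gap //; right; exists p.
Qed.

(* Splitting off the 2-part of the gap reduces the criterion to odd gaps. *)
Lemma crit_iff_scaled na nb : nb < na ->
  crit na nb <->
  exists k a b, [/\ na = 2 ^ k * a, nb = 2 ^ k * b & odd_gap_family a b].
Proof.
move=> hab; split=> [hcrit|[k [a [b [-> -> hfam]]]]]; last first.
  by have [hba hcrit] := family_crit hfam; rewrite crit_scale.
have [k [D [oD ED]]] := odd_part (ltac:(lia) : 1 <= na - nb).
have hk : 2 ^ k %| na - nb by rewrite ED dvdn_mulr.
have [/dvdnP [a Ea] /dvdnP [b Eb]] := crit_dvd_pow2 hab hcrit hk.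
have hX : 0 < 2 ^ k by rewrite expn_gt0.
rewrite mulnC in Ea; rewrite mulnC in Eb.
have hba : b < a by rewrite -(ltn_pmul2l hX) -Ea -Eb.
have Dab : a - b = D by apply/eqP; rewrite -(eqn_pmul2l hX) mulnBr -Ea -Eb ED.
exists k, a, b; split=> //; apply: crit_family => //; first by rewrite Dab.
by rewrite -(crit_scale k) // -Ea -Eb.
Qed.

Definition qb_families (n na nb : nat) : Prop :=
  (exists k p, 1 <= p /\
     n = 2 ^ k * (2 * p + 1) /\ na = 2 ^ k * (p + 1) /\ nb = 2 ^ k * p) \/
  (exists k l p t, 2 <= l /\ 1 <= p /\ t < 2 ^ (l - 2) /\
     n = 2 ^ k * (2 ^ l * (2 * p + 1) + 2 * t + 1) /\
     na = 2 ^ (k + l) * (p + 1) /\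
     nb = 2 ^ k * (2 ^ l * p + 2 * t + 1)) \/
  (exists k l p t, 2 <= l /\ 1 <= p /\ t < 2 ^ (l - 2) /\
     n = 2 ^ k * (2 ^ l * (2 * p + 1) - (2 * t + 1)) /\
     na = 2 ^ k * (2 ^ l * (p + 1) - (2 * t + 1)) /\
     nb = 2 ^ (k + l) * p).

Lemma families_scaled n na nb : na + nb = n ->
  (exists k a b, [/\ na = 2 ^ k * a, nb = 2 ^ k * b & odd_gap_family a b]) <->
  qb_families n na nb.
Proof.
move=> <-; split.
- case=> k [a [b [-> -> [[p [hp [-> ->]]]|[]]]]].
  + by left; exists k, p; rewrite -mulnDr; do !split=> //; congr (_ * _); lia.
  + case=> l [p [t [hl [hp [ht [-> ->]]]]]].
    right; left; exists k, l, p, t; rewrite expnD -mulnA -mulnDr.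
    by do !split=> //; congr (_ * _); lia.
  + case=> l [p [t [hl [hp [ht [-> ->]]]]]].
    right; right; exists k, l, p, t; rewrite expnD -mulnA -mulnDr.
    have := pow2_quarter hl.
    by do !split=> //; congr (_ * _); nia.
- case=> [[k [p [hp [_ [-> ->]]]]]|[]].
  + by exists k, (p + 1), p; split=> //; left; exists p.
  + case=> k [l [p [t [hl [hp [ht [_ [-> ->]]]]]]]].
    exists k, (2 ^ l * (p + 1)), (2 ^ l * p + 2 * t + 1); rewrite expnD -mulnA.
    by split=> //; right; left; exists l, p, t.
  + case=> k [l [p [t [hl [hp [ht [_ [-> ->]]]]]]]].
    exists k, (2 ^ l * (p + 1) - (2 * t + 1)), (2 ^ l * p); rewrite expnD -mulnA.
    by split=> //; right; right; exists l, p, t.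
Qed.

Theorem proposition2 (n na nb : nat) :
  2 <= n -> 1 <= na -> 1 <= nb -> nb <= na -> na + nb = n ->
  (na = nb -> QB n na nb) /\
  (nb < na ->
    (QB n na nb <->
     ((exists k p, 1 <= p /\
         n = 2 ^ k * (2 * p + 1) /\ na = 2 ^ k * (p + 1) /\ nb = 2 ^ k * p)
      \/
      (exists k l p t, 2 <= l /\ 1 <= p /\ t < 2 ^ (l - 2) /\
         n = 2 ^ k * (2 ^ l * (2 * p + 1) + 2 * t + 1) /\
         na = 2 ^ (k + l) * (p + 1) /\
         nb = 2 ^ k * (2 ^ l * p + 2 * t + 1))
      \/
      (exists k l p t, 2 <= l /\ 1 <= p /\ t < 2 ^ (l - 2) /\
         n = 2 ^ k * (2 ^ l * (2 * p + 1) - (2 * t + 1)) /\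
         na = 2 ^ k * (2 ^ l * (p + 1) - (2 * t + 1)) /\
         nb = 2 ^ (k + l) * p)))).
Proof.
move=> _ ha hb hba Hn.
have [_ optimal] := split_law_holds hb hba.
have QB_split : QB n na nb <-> fbal (na + nb) = split_cost na nb.
  have hsum : 1 <= na + nb by rewrite addn_gt0 ha.
  rewrite /QB /split_cost -Hn !min_colless_fbal //.
  by split=> [[_ _ _ <-] | <-].
split=> [eq_ab | lt_ab].
  by apply/QB_split/optimal; left.
apply: (iff_trans _ (families_scaled Hn)).
by rewrite -crit_iff_scaled // QB_split optimal; split=> [[|] //|]; [lia | right].
Qed.
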